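(* Let $\mathcal{C}=\mathcal{I}_i$ be an irreducible $\lambda$-constacyclic code of length $n$ and dimension $k$ over $\mathbb{F}_q$ corresponding to the $q$-cyclotomic coset $C_{1+t\alpha_i}$ (so $k=d_i$). Then $$N_{\langle\rho,M\rangle}(\mathcal{C}^{*})=\frac{(q^k-1)\gcd\big((q-1)(1+t\alpha_i),\,tn\big)}{(q-1)tn}.$$ Moreover, the number of distinct nonzero Hamming weights of $\mathcal{C}$ is at most $N_{\langle\rho,M\rangle}(\mathcal{C}^{*})$, with equality if and only if for any two nonzero codewords $c_1,c_2\in\mathcal{C}$ of the same Hamming weight there exist an integer $j$ and $b\in\mathbb{F}_q^{*}$ with $\rho^{j}(bc_1)=c_2$.
   Context: Standing setup: $q$ is a prime power, $n$ a positive integer with $\gcd(n,q)=1$, $\lambda\in\mathbb{F}_q^{*}$ has multiplicative order $t$ (so $t\mid q-1$). $\mathcal{R}=\mathbb{F}_q[x]/\langle x^n-\lambda\rangle$; vectors in $\mathbb{F}_q^n$ are identified with polynomials of degree $<n$, and a $\lambda$-constacyclic code of length $n$ is an ideal of $\mathcal{R}$. Let $\zeta$ be a primitive $tn$-th root of unity in an extension $\mathbb{F}_{q^m}$ with $\zeta^n=\lambda$. The set $\mathcal{S}=\{1+ti:0\le i\le n-1\}$ (residues mod $tn$) is partitioned into the distinct $q$-cyclotomic cosets modulo $tn$, $C_{1+t\alpha_j}=\{(1+t\alpha_j)q^{h}\bmod tn: h\ge 0\}$, $j=0,\dots,s$, with $0=\alpha_0<\dots<\alpha_s\le n-1$ and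 $d_j=|C_{1+t\alpha_j}|$. Let $m_j(x)=\prod_{h\in C_{1+t\alpha_j}}(x-\zeta^{h})$, and let $\mathcal{I}_j$ be the ideal of $\mathcal{R}$ generated by $(x^n-\lambda)/m_j(x)$ (the irreducible $\lambda$-constacyclic code of dimension $d_j$ corresponding to $C_{1+t\alpha_j}$). The cyclic shift $\rho$ is $\rho(c(x))=xc(x)$ in $\mathcal{R}$, i.e. $(c_0,\dots,c_{n-1})\mapsto(\lambda c_{n-1},c_0,\dots,c_{n-2})$; $\langle\rho\rangle$ has order $tn$. For $b\in\mathbb{F}_q^{*}$, $\sigma_b(c)=bc$ (scalar multiplication), $M=\{\sigma_b:b\in\mathbb{F}_q^{*}\}$, and $\langle\rho,M\rangle$ is the group of $\mathbb{F}_q$-linear maps generated by $\rho$ and $M$ (it equals $\langle\rho\rangle\times M$, of order $tn(q-1)$). $\mathcal{C}^{*}=\mathcal{C}\setminus\{0\}$, and $N_G(X)$ is the number of orbits of a group $G$ acting on $X$. *)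

From HB Require Import structures.
From mathcomp Require Import all_boot all_order all_algebra all_fingroup all_field.
From mathcomp Require Import boolp.
Set Implicit Arguments. Unset Strict Implicit. Unset Printing Implicit Defensive.
Import GRing.Theory.
Local Open Scope ring_scope.

Section Defs.
Variable F : finFieldType.
Variable n : nat.

Definition wt (c : 'rV[F]_n) : nat := #|[set i : 'I_n | c 0 i != 0]|.

(* constacyclic shift rho : (c_0,...,c_{n-1}) |-> (lam c_{n-1}, c_0, ..., c_{n-2}) *)
Definition rho (lam : F) (c : 'rV[F]_n) : 'rV[F]_n :=
  \row_(i < n) ((if val i == 0%N then lam else 1) * c 0 (ord_pred i)).

Lemma rho_inj (lam : {unit F}) : injective (rho (val lam)).
Proof.
move=> c d /rowP H; apply/rowP => j.
have := H (ordS j); rewrite !mxE ordSK.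
case: (_ == _); last by rewrite !mul1r.
by apply: mulrI; exact: (valP lam).
Qed.

Definition rho_perm (lam : {unit F}) : {perm 'rV[F]_n} := perm (@rho_inj lam).

Lemma sigma_inj (b : {unit F}) : injective (fun c : 'rV[F]_n => val b *: c).
Proof. by move=> c d; apply: scalerI; rewrite -unitfE; exact: (valP b). Qed.

Definition sigma_perm (b : {unit F}) : {perm 'rV[F]_n} := perm (@sigma_inj b).

Definition rhoM_group (lam : {unit F}) : {group {perm 'rV[F]_n}} :=
  <<rho_perm lam |: [set sigma_perm b | b : {unit F}]>>%G.

Definition in_cyc (N q r x : nat) : bool :=
  [exists h : 'I_N.+1, x == (r * q ^ h) %% N]%N.

Definition cyc_coset (N q r : nat) : {set 'I_N} := [set x : 'I_N | in_cyc N q r x].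

Definition min_poly_coset (L : fieldExtType F) (zeta : L) (N q r : nat) : {poly L} :=
  \prod_(h in cyc_coset N q r) ('X - (zeta ^+ h)%:P).

Definition gen_poly_L (L : fieldExtType F) (zeta : L) (lam : F) (N q r : nat) : {poly L} :=
  ('X^n - (lam%:A)%:P) %/ min_poly_coset zeta N q r.

(* the ideal of R = F[x]/<x^n - lam> generated by g, as a set of vectors
   (vectors identified with polynomials of degree < n via rVpoly) *)
Definition ideal_gen (lam : F) (g : {poly F}) : {set 'rV[F]_n} :=
  [set c : 'rV[F]_n | `[< exists a : {poly F}, rVpoly c = (a * g) %% ('X^n - lam%:P) >] ].

End Defs.

From HB Require Import structures.
From mathcomp Require Import all_boot all_order all_algebra all_fingroup all_field.
From mathcomp Require Import boolp zify.
From mathcomp Require Import pgroup abelian.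
Set Implicit Arguments. Unset Strict Implicit. Unset Printing Implicit Defensive.
Import GRing.Theory.
Local Open Scope ring_scope.

(* Identify codewords with polynomials of degree < n and evaluate them at
   theta = zeta ^ (1 + t alpha).  A codeword vanishes at every root of x^n - lam
   outside the coset of theta, and its values at the Frobenius conjugates
   theta ^ (q ^ e) are powers of its value at theta, so evaluation at theta is
   injective on the code.  It turns rho into multiplication by theta and sigma_b
   into multiplication by b, so the orbit of a nonzero codeword is in bijection
   with the pairs (i, b), i mod tn, b in F^*, up to theta^i b = theta^j b'.
   Raising to the power q - 1 shows that this happens iff i w = j w mod tn with
   w = (q - 1)(1 + t alpha), hence every orbit has tn (q - 1) / gcd(w, tn)
   elements.  The weight is constant on orbits, which bounds the number of
   weights by the number of orbits, with equality iff equal weights force equal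
   orbits. *)

Lemma card_mul_congr_mod (N w j : nat) : (0 < N)%N ->
  #|[set i : 'I_N | (i * w == j * w %[mod N])%N]| = gcdn w N.
Proof.
move=> N_gt0; set d := gcdn w N.
have d_gt0 : (0 < d)%N by rewrite gcdn_gt0 N_gt0 orbT.
set N' := (N %/ d)%N; set w' := (w %/ d)%N.
have eN : N = (N' * d)%N by rewrite divnK // dvdn_gcdr.
have ew : w = (w' * d)%N by rewrite divnK // dvdn_gcdl.
have N'_gt0 : (0 < N')%N by move: N_gt0; rewrite eN muln_gt0 => /andP[].
have coN'w' : coprime N' w'.
  rewrite /coprime -(eqn_pmul2r d_gt0) mul1n.
  by rewrite muln_gcdl -eN -ew gcdnC.
have congr_le a b : (a <= b)%N -> (b * w == a * w %[mod N])%N = (b == a %[mod N'])%N.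
  move=> ab; rewrite eqn_mod_dvd ?leq_mul2r ?ab ?orbT // eqn_mod_dvd //.
  by rewrite -mulnBl {1}eN ew mulnA dvdn_pmul2r // Gauss_dvdl.
have congrE i : (i * w == j * w %[mod N])%N = (i == j %[mod N'])%N.
  case: (leqP j i) => [ji|/ltnW ij]; first exact: congr_le.
  by rewrite eq_sym congr_le // eq_sym.
(* The solutions are the j %% N' + x * N' with x < d. *)
have sol_lt (x : 'I_d) : (j %% N' + x * N' < N)%N.
  have := ltn_pmod j N'_gt0; have := ltn_ord x; rewrite eN => xd jN.
  have : (x.+1 * N' <= d * N')%N by rewrite leq_mul2r xd orbT.
  rewrite mulSn; lia.
pose sol (x : 'I_d) : 'I_N := Ordinal (sol_lt x).
have -> : [set i : 'I_N | (i * w == j * w %[mod N])%N] = sol @: setT.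
  apply/setP => i; rewrite inE congrE; apply/idP/imsetP.
    move=> /eqP ij; have xd : (i %/ N' < d)%N by rewrite ltn_divLR // mulnC -eN.
    exists (Ordinal xd); rewrite ?inE //; apply: val_inj => /=.
    by rewrite -ij addnC -divn_eq.
  by case=> x _ -> /=; apply/eqP; rewrite addnC modnMDl modn_mod.
rewrite card_imset ?cardsT ?card_ord // => x y /(congr1 val) /= /eqP.
by rewrite eqn_add2l eqn_pmul2r // => /eqP /val_inj.
Qed.

Lemma card_imset_uniform_fibers (aT rT : finType) (f : aT -> rT) (A : {set aT}) m :
  (forall y, y \in A -> #|[set x in A | f x == f y]| = m) ->
  (#|f @: A| * m)%N = #|A|.
Proof.
move=> card_fiber; rewrite -[RHS]sum1_card (partition_big f (mem (f @: A))) /=; last first.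
  by move=> x xA; apply: imset_f.
rewrite -sum_nat_const; apply: eq_bigr => _ /imsetP [y yA ->].
by rewrite sum1dep_card -(card_fiber y yA); apply: eq_card => x; rewrite !inE.
Qed.

Section FinFieldExtension.
Variables (F : finFieldType) (L : fieldExtType F).

Lemma pchar_nat_card : [pchar L].-nat #|F|.
Proof.
have [p _ pF] := finPcharP F.
have pL : p \in [pchar L] by rewrite pchar_lalg.
rewrite (eq_pnat _ (pcharf_eq pL)).
by have := abelem_pgroup (fin_ring_pchar_abelem pF); rewrite /pgroup cardsT.
Qed.

Lemma horner_map_expr_card (P : {poly F}) (x : L) :
  (map_poly (in_alg L) P).[x] ^+ #|F| = (map_poly (in_alg L) P).[x ^+ #|F|].
Proof.
have frob0 : 0 ^+ #|F| = 0 :> L.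
  by rewrite expr0n -(subnKC (finNzRing_gt1 F)).
have frobD (y z : L) : (y + z) ^+ #|F| = y ^+ #|F| + z ^+ #|F|.
  exact: exprDn_pchar pchar_nat_card.
rewrite !horner_coef (big_morph _ frobD frob0); apply: eq_bigr => i _.
by rewrite exprMn -!exprM mulnC coef_map /= exprZn expr1n expf_card.
Qed.

Lemma expr_card_exp (b : F) e : b ^+ (#|F| ^ e) = b.
Proof.
elim: e => [|e IH]; first by rewrite expn0 expr1.
by rewrite expnSr exprM IH expf_card.
Qed.

Lemma horner_map_expr_card_exp (P : {poly F}) (x : L) e :
  (map_poly (in_alg L) P).[x] ^+ (#|F| ^ e) = (map_poly (in_alg L) P).[x ^+ (#|F| ^ e)].
Proof.
elim: e => [|e IH]; first by rewrite !expn0 !expr1.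
by rewrite expnSr !exprM IH horner_map_expr_card.
Qed.

Lemma expr_card_pred_unit (b : F) : b != 0 -> b ^+ #|F|.-1 = 1.
Proof.
move=> b0; apply: (mulfI b0); rewrite mulr1 -exprS prednK ?expf_card //.
exact: ltnW (finNzRing_gt1 F).
Qed.

Lemma in_alg_expr_card_pred (b : F) : b != 0 -> (b%:A : L) ^+ #|F|.-1 = 1.
Proof. by move=> b0; rewrite -!in_algE -rmorphXn expr_card_pred_unit ?rmorph1. Qed.

Lemma expr_card_pred_in_alg (x : L) :
  x ^+ #|F|.-1 = 1 -> exists2 b : F, b != 0 & x = b%:A.
Proof.
move=> x1; have xq : x ^+ #|F| == x.
  by rewrite -(prednK (ltnW (finNzRing_gt1 F))) // exprS x1 mulr1.
have : x \in (1%AS : {subfield L}) by rewrite Fermat's_little_theorem dimv1 expn1.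
case/vlineP => b xb; exists b; last by rewrite xb.
apply/eqP => b0; move: x1; rewrite xb b0 scale0r expr0n -(subnKC (finNzRing_gt1 F)) /=.
by move/eqP; rewrite eq_sym oner_eq0.
Qed.

End FinFieldExtension.

Definition rVhorner (F : fieldType) (L : fieldExtType F) (n : nat)
    (c : 'rV[F]_n) (x : L) : L :=
  (map_poly (in_alg L) (rVpoly c)).[x].

Section Constacyclic.
Variables (F : finFieldType) (n : nat) (lam : F).
Hypothesis n_gt0 : (0 < n)%N.
Local Notation f := ('X^n - lam%:P).

Lemma size_Xn_sub_lam : size f = n.+1. Proof. exact: size_XnsubC. Qed.

Lemma rVpoly_rho (c : 'rV[F]_n) :
  rVpoly (rho lam c) = 'X * rVpoly c - ((rVpoly c)`_n.-1)%:P * f.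
Proof.
apply/polyP => i.
rewrite coefB coefXM coefCM coefB coefXn coefC coef_rVpoly.
case: insubP => [j ji <-|ni].
  rewrite mxE -coef_rVpoly_ord /=.
  case: j ji => [[|j'] ltj] /= _.
    rewrite add0n modn_small; last by rewrite prednK.
    by rewrite eq_sym (gtn_eqF n_gt0) !sub0r mulrN opprK mulrC.
  rewrite modnDr modn_small; last exact: ltn_trans ltj.
  by rewrite (ltn_eqF ltj) mul1r subr0 mulr0 subr0.
have [i0|i_gt0] := posnP i; first by rewrite i0 n_gt0 in ni.
rewrite subr0.
have [->|ne] := eqVneq i n; first by rewrite mulr1 subrr.
rewrite [_`_i.-1]nth_default ?mulr0 ?subr0 //.
apply: leq_trans (size_poly _ _) _; move: ni ne; rewrite -leqNgt; lia.
Qed.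

Lemma rho0 : rho lam 0 = 0 :> 'rV[F]_n.
Proof. by apply/rowP => i; rewrite !mxE mulr0. Qed.

Lemma rhoZ (b : F) (c : 'rV[F]_n) : rho lam (b *: c) = b *: rho lam c.
Proof. by apply/rowP => i; rewrite !mxE mulrCA. Qed.

Lemma iter_rhoZ j (b : F) (c : 'rV[F]_n) :
  iter j (rho lam) (b *: c) = b *: iter j (rho lam) c.
Proof. by elim: j => //= j ->; rewrite rhoZ. Qed.

Lemma wtZ (b : F) (c : 'rV[F]_n) : b != 0 -> wt (b *: c) = wt c.
Proof. by move=> b0; apply: eq_card => i; rewrite !inE mxE mulf_eq0 negb_or b0. Qed.

Lemma wt_rho (c : 'rV[F]_n) : lam != 0 -> wt (rho lam c) = wt c.
Proof.
move=> lam0; rewrite /wt -[in RHS](card_preimset _ (@ord_pred_inj n)).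
apply: eq_card => i; rewrite !inE mxE mulf_eq0 negb_or.
by case: ifP => _; rewrite ?lam0 ?oner_neq0.
Qed.

Lemma ideal_gen0 g : 0 \in ideal_gen n lam g.
Proof. by rewrite inE; apply/asboolP; exists 0; rewrite linear0 mul0r mod0p. Qed.

Lemma ideal_genZ g b c : c \in ideal_gen n lam g -> b *: c \in ideal_gen n lam g.
Proof.
rewrite !inE => /asboolP [a ca]; apply/asboolP; exists (b%:P * a).
by rewrite linearZ /= ca -modpZl mul_polyC scalerAl.
Qed.

Lemma ideal_gen_rho g c : c \in ideal_gen n lam g -> rho lam c \in ideal_gen n lam g.
Proof.
rewrite !inE => /asboolP [a ca]; apply/asboolP; exists ('X * a).
have Xc : 'X * rVpoly c = ((rVpoly c)`_n.-1)%:P * f + rVpoly (rho lam c).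
  by rewrite rVpoly_rho addrC subrK.
rewrite -[rVpoly (rho lam c)](modp_addl_mul_small (d := f) ((rVpoly c)`_n.-1)%:P); last first.
  by rewrite size_Xn_sub_lam ltnS size_poly.
by rewrite -Xc ca modp_mul mulrA.
Qed.

Lemma ideal_gen_iter_rhoZ g j b c :
  c \in ideal_gen n lam g -> iter j (rho lam) (b *: c) \in ideal_gen n lam g.
Proof.
move=> cC; elim: j => [|j IH] /=; [exact: ideal_genZ | exact: ideal_gen_rho].
Qed.

Lemma card_ideal_gen (g : {poly F}) : g != 0 -> g %| f ->
  #|ideal_gen n lam g| = (#|F| ^ (n.+1 - size g))%N.
Proof.
move=> g0 gf; set k := (n.+1 - size g)%N.
have sg : (size g <= n.+1)%N.
  by rewrite -size_Xn_sub_lam dvdp_leq // -size_poly_eq0 size_Xn_sub_lam.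
have size_mul_g (B : {poly F}) : (size B <= k)%N -> (size (B * g)%R <= n)%N.
  move=> sB; apply: leq_trans (size_polyMleq _ _) _; move: sB; rewrite /k -subn1; lia.
pose enc (b : 'rV[F]_k) : 'rV[F]_n := poly_rV (rVpoly b * g).
suff -> : ideal_gen n lam g = enc @: setT.
  rewrite card_imset ?cardsT ?card_mx ?mul1n // => b1 b2 /(congr1 rVpoly).
  by rewrite !poly_rV_K ?size_mul_g ?size_poly // => /(mulIf g0)/(can_inj rVpolyK).
apply/setP => c; rewrite inE; apply/asboolP/imsetP => [[a ca]|[b _ ->]].
  pose B : {poly F} := a - (a * g %/ f) * (f %/ g).
  have cB : rVpoly c = B * g.
    rewrite ca /B mulrBl -mulrA divpK //.
    by rewrite {2}(divp_eq (a * g) f) addrAC subrr add0r.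
  have sB : (size B <= k)%N.
    have [->|B0] := eqVneq B 0; first by rewrite size_poly0.
    have : (size (rVpoly c) <= n)%N := size_poly _ _.
    have := size_poly_gt0 g; rewrite g0 cB size_mul // -subn1 /k.
    by set sB := size B; set s_g := size g; lia.
  by exists (poly_rV B); rewrite ?inE // /enc poly_rV_K // -cB rVpolyK.
exists (rVpoly b); rewrite /enc poly_rV_K ?size_mul_g ?size_poly // modp_small //.
by rewrite size_Xn_sub_lam ltnS size_mul_g ?size_poly.
Qed.

Variable L : fieldExtType F.

Lemma rVhorner0 (x : L) : rVhorner (0 : 'rV[F]_n) x = 0.
Proof. by rewrite /rVhorner linear0 rmorph0 horner0. Qed.

Lemma rVhornerZ b (c : 'rV[F]_n) (x : L) : rVhorner (b *: c) x = b%:A * rVhorner c x.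
Proof. by rewrite /rVhorner linearZ /= map_polyZ hornerZ mulr_algl. Qed.

Lemma rVhorner_rho (c : 'rV[F]_n) (x : L) : x ^+ n = lam%:A ->
  rVhorner (rho lam c) x = x * rVhorner c x.
Proof.
move=> xn; rewrite /rVhorner rVpoly_rho rmorphB !rmorphM /= map_polyX map_polyC.
by rewrite rmorphB /= map_polyXn map_polyC !hornerE xn subrr mulr0 subr0.
Qed.

Lemma rVhorner_iter_rhoZ j b (c : 'rV[F]_n) (x : L) : x ^+ n = lam%:A ->
  rVhorner (iter j (rho lam) (b *: c)) x = x ^+ j * b%:A * rVhorner c x.
Proof.
move=> xn; elim: j => [|j IH] /=; first by rewrite expr0 mul1r rVhornerZ.
by rewrite rVhorner_rho // IH exprS !mulrA.
Qed.

Lemma rVhorner_ideal_gen g (c : 'rV[F]_n) (x : L) :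
  c \in ideal_gen n lam g -> root (map_poly (in_alg L) g) x -> x ^+ n = lam%:A ->
  rVhorner c x = 0.
Proof.
rewrite inE /rVhorner => /asboolP [a ->] /rootP gx xn.
have -> : (a * g) %% f = a * g - (a * g %/ f) * f.
  by rewrite {2}(divp_eq (a * g) f) addrAC subrr add0r.
rewrite rmorphB !rmorphM /= !hornerE gx.
by rewrite rmorphB /= map_polyXn map_polyC !hornerE xn subrr !mulr0 oppr0.
Qed.

End Constacyclic.

Section OrbitValues.
Variables (aT : finGroupType) (T : finType) (to : {action aT &-> T}).
Variables (G : {group aT}) (S : {set T}) (R : eqType) (f : T -> R).
Hypothesis f_orbit : forall x y, y \in orbit to G x -> f y = f x.

Let orbit_value (A : {set T}) : option R := omap f [pick x in A].

Let orbit_valueE x : orbit_value (orbit to G x) = Some (f x).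
Proof.
rewrite /orbit_value; case: pickP => [y /f_orbit /= -> //|no_y].
by have := no_y x; rewrite orbit_refl.
Qed.

Let size_values_orbits :
  size (undup [seq f x | x <- enum S]) =
  size (undup [seq orbit_value A | A <- enum (orbit to G @: S)]).
Proof.
rewrite -[LHS](size_map Some) -undup_map_inj; last by move=> ? ? [].
rewrite -map_comp.
apply/perm_size/perm_undup => v; apply/mapP/mapP => [[x] | [A]].
  by rewrite mem_enum => xS ->; exists (orbit to G x); rewrite ?orbit_valueE ?mem_enum ?imset_f.
by rewrite mem_enum => /imsetP [x xS ->] ->; exists x; rewrite ?orbit_valueE ?mem_enum.
Qed.

Lemma card_orbit_values_le :
  (size (undup [seq f x | x <- enum S]) <= #|orbit to G @: S|)%N.
Proof. by rewrite size_values_orbits cardE (leq_trans (size_undup _)) ?size_map. Qed.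

Lemma card_orbit_values_eq :
  size (undup [seq f x | x <- enum S]) = #|orbit to G @: S| <->
  {in S &, forall x y, f x = f y -> y \in orbit to G x}.
Proof.
rewrite size_values_orbits cardE -(size_map orbit_value).
have -> : size (undup [seq orbit_value A | A <- enum (orbit to G @: S)]) =
           size [seq orbit_value A | A <- enum (orbit to G @: S)] <->
          {in orbit to G @: S &, injective orbit_value}.
  split=> [size_eq | /dinjectiveP/undup_id -> //]; apply/dinjectiveP.
  by apply: contraT; rewrite /dinjectiveb -ltn_size_undup size_eq ltnn.
split=> [inj_val x y xS yS fxy | same_orbit _ _ /imsetP [x xS ->] /imsetP [y yS ->]].
  rewrite orbit_sym; apply/orbit_eqP/inj_val; rewrite ?imset_f //.
  by rewrite !orbit_valueE fxy.
rewrite !orbit_valueE => -[/(same_orbit x y xS yS) yx].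
by apply/esym/orbit_eqP.
Qed.

End OrbitValues.

Section ShiftScaleGroup.
Variables (F : finFieldType) (n : nat) (lam : {unit F}).
Local Notation l := (val lam).

Definition shift_scale_perm (b : {unit F}) j : {perm 'rV[F]_n} :=
  (sigma_perm n b * rho_perm n lam ^+ j)%g.

Lemma shift_scale_permE b j (x : 'rV[F]_n) :
  shift_scale_perm b j x = iter j (rho l) (val b *: x).
Proof. by rewrite permM permX permE; exact: eq_iter (permE _) _ _. Qed.

Lemma shift_scale_perm_in b j : shift_scale_perm b j \in rhoM_group n lam.
Proof.
apply: groupM; first by apply: mem_gen; apply/setU1r; apply: imset_f.
by apply: groupX; apply: mem_gen; apply: setU11.
Qed.

Definition shift_scale_perms : {set {perm 'rV[F]_n}} :=
  [set p : {perm 'rV[F]_n} |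
    `[< exists j (b : F), b != 0 /\ forall x, p x = iter j (rho l) (b *: x) >] ].

Lemma shift_scale_perms_group : group_set shift_scale_perms.
Proof.
apply/group_setP; split.
  rewrite inE; apply/asboolP; exists 0%N, 1; split; first exact: oner_neq0.
  by move=> x; rewrite perm1 scale1r.
move=> p1 p2; rewrite !inE => /asboolP [j1 [b1 [b10 p1E]]] /asboolP [j2 [b2 [b20 p2E]]].
apply/asboolP; exists (j2 + j1)%N, (b2 * b1); split; first by rewrite mulf_neq0.
by move=> x; rewrite permM p1E p2E iterD -scalerA -iter_rhoZ.
Qed.

Lemma rhoM_groupE : rhoM_group n lam = shift_scale_perms :> {set _}.
Proof.
apply/eqP; rewrite eqEsubset; apply/andP; split.
  rewrite -[shift_scale_perms]/(gval (Group shift_scale_perms_group)) gen_subG.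
  apply/subsetP => p; rewrite !inE => /orP [/eqP ->|/imsetP [b _ ->]]; apply/asboolP.
    by exists 1%N, 1; split; [exact: oner_neq0 | move=> x; rewrite permE scale1r].
  exists 0%N, (val b); split; last by move=> x; rewrite permE.
  by rewrite -unitfE; exact: (valP b).
apply/subsetP => p; rewrite inE => /asboolP [j [b [b0 pE]]].
have -> : p = shift_scale_perm (finField_unit b0) j.
  by apply/permP => x; rewrite pE shift_scale_permE.
exact: shift_scale_perm_in.
Qed.

Lemma orbit_rhoM_groupP (c d : 'rV[F]_n) :
  reflect (exists j (b : F), b != 0 /\ iter j (rho l) (b *: c) = d)
          (d \in orbit 'P (rhoM_group n lam) c).
Proof.
apply: (iffP orbitP) => [[p] | [j [b [b0 <-]]]].
  rewrite rhoM_groupE inE => /asboolP [j [b [b0 pE]]] <-.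
  by exists j, b; rewrite /= apermE pE.
exists (shift_scale_perm (finField_unit b0) j); first exact: shift_scale_perm_in.
by rewrite /= apermE shift_scale_permE.
Qed.

Lemma iter_rhoZ_eq0 j (b : F) (x : 'rV[F]_n) :
  b != 0 -> (iter j (rho l) (b *: x) == 0) = (x == 0).
Proof.
move=> b0; rewrite iter_rhoZ scaler_eq0 (negbTE b0) /=.
by elim: j => //= j <-; rewrite -{1}(rho0 n l) (inj_eq (@rho_inj _ _ lam)).
Qed.

Lemma rhoM_group_acts (D : {set 'rV[F]_n}) :
  (forall j b x, b != 0 -> x \in D -> iter j (rho l) (b *: x) \in D) ->
  [acts rhoM_group n lam, on D | 'P].
Proof.
move=> closedD; have stableD p x : p \in rhoM_group n lam -> x \in D -> p x \in D.
  by rewrite rhoM_groupE inE => /asboolP [j [b [b0 ->]]]; apply: closedD.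
apply/actsP => p pG x /=; rewrite apermE; apply/idP/idP; last exact: stableD.
by move=> pxD; rewrite -(permK p x); apply: stableD; rewrite ?groupVr.
Qed.

Lemma wt_orbit_rhoM (x y : 'rV[F]_n) :
  y \in orbit 'P (rhoM_group n lam) x -> wt y = wt x.
Proof.
have lam0 : l != 0 by rewrite -unitfE; exact: (valP lam).
case/orbit_rhoM_groupP => j [b [b0 <-]].
by elim: j => /= [|j IH]; rewrite ?wtZ ?wt_rho.
Qed.

End ShiftScaleGroup.

Section IrreducibleCode.
Variables (F : finFieldType) (n t : nat) (lam : {unit F}) (alpha : nat).
Variables (L : fieldExtType F) (zeta : L) (g : {poly F}).
Hypotheses (n_gt0 : (0 < n)%N) (t_gt0 : (0 < t)%N).
Hypotheses (lam_prim : t.-primitive_root (val lam))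
  (zeta_prim : (t * n)%N.-primitive_root zeta) (zeta_n : zeta ^+ n = (val lam)%:A).

Local Notation l := (val lam).
Local Notation q := #|F|.
Local Notation tn := (t * n)%N.
Local Notation u := (1 + t * alpha)%N.
Local Notation S := (cyc_coset tn q u).
Local Notation k := #|S|.
Local Notation theta := (zeta ^+ u).
Local Notation m := (min_poly_coset zeta tn q u).
Local Notation fL := ('X^n - (l%:A)%:P : {poly L}).
Local Notation C := (ideal_gen n l g).

Hypothesis g_def : map_poly (in_alg L) g = gen_poly_L n zeta l tn q u.

Lemma tn_gt0 : (0 < tn)%N. Proof. by rewrite muln_gt0 t_gt0 n_gt0. Qed.

Lemma expr_zeta_tn : zeta ^+ tn = 1. Proof. exact: prim_expr_order zeta_prim. Qed.

Lemma expr_theta_n : theta ^+ n = l%:A.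
Proof.
have lam_u : l ^+ u = l.
  by rewrite exprD expr1 exprM (prim_expr_order lam_prim) expr1n mulr1.
by rewrite -exprM mulnC exprM zeta_n -in_algE -rmorphXn lam_u.
Qed.

Lemma root_Xn_sub_lam (x : L) : root fL x = (x ^+ n == l%:A).
Proof. by rewrite rootE !hornerE subr_eq0. Qed.

Lemma root_Xn_sub_lam_conj e : root fL (theta ^+ (q ^ e)).
Proof.
rewrite root_Xn_sub_lam exprAC expr_theta_n.
by rewrite -in_algE -rmorphXn expr_card_exp.
Qed.

Lemma min_poly_cosetE :
  m = \prod_(z <- [seq zeta ^+ h | h : 'I_tn <- enum S]) ('X - z%:P).
Proof. by rewrite /min_poly_coset big_map big_enum. Qed.

Lemma root_min_poly_coset (x : L) : root m x -> exists e, x = theta ^+ (q ^ e).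
Proof.
rewrite min_poly_cosetE root_prod_XsubC => /mapP [h].
rewrite mem_enum inE => /existsP [e /eqP hE] ->; exists e.
by rewrite hE (expr_mod _ expr_zeta_tn) -exprM.
Qed.

Lemma min_poly_coset_dvd : m %| fL.
Proof.
rewrite min_poly_cosetE; apply: uniq_roots_dvdp.
  apply/allP => x xS; have /root_min_poly_coset [e ->] : root m x.
    by rewrite min_poly_cosetE root_prod_XsubC.
  exact: root_Xn_sub_lam_conj.
rewrite uniq_rootsE map_inj_in_uniq ?enum_uniq // => h1 h2 _ _ /eqP.
by rewrite (eq_prim_root_expr zeta_prim) !modn_small // => /eqP /val_inj.
Qed.

Lemma gen_poly_mul_min_poly : map_poly (in_alg L) g * m = fL.
Proof. by rewrite g_def divpK ?min_poly_coset_dvd. Qed.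

Lemma gen_poly_neq0 : g != 0.
Proof.
apply: contra_eq_neq gen_poly_mul_min_poly => ->.
by rewrite rmorph0 mul0r eq_sym -size_poly_eq0 size_XnsubC.
Qed.

Lemma size_gen_poly : (size g + k)%N = n.+1.
Proof.
have := congr1 (fun p : {poly L} => size p) gen_poly_mul_min_poly.
rewrite /= size_mul ?map_poly_eq0 ?gen_poly_neq0 ?min_poly_cosetE ?monic_neq0 //.
  by rewrite size_XnsubC // size_map_poly size_prod_XsubC size_map -cardE addnS.
exact: monic_prod_XsubC.
Qed.

Lemma gen_poly_dvd : g %| 'X^n - l%:P.
Proof.
rewrite -(dvdp_map (in_alg L)) rmorphB /= map_polyXn map_polyC.
by rewrite -gen_poly_mul_min_poly dvdp_mulr.
Qed.

Lemma card_code_nonzero : #|C :\ 0%R| = (q ^ k - 1)%N.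
Proof.
have card_C : #|C| = (q ^ k)%N.
  by rewrite card_ideal_gen ?gen_poly_neq0 ?gen_poly_dvd // -size_gen_poly addKn.
by rewrite -card_C (cardsD1 0 C) ideal_gen0 add1n subn1.
Qed.

Lemma code_vanishes_off_coset c (x : L) :
  c \in C -> root fL x -> ~~ root m x -> rVhorner c x = 0.
Proof.
move=> cC fx not_mx; apply: rVhorner_ideal_gen cC _ _; last first.
  by apply/eqP; rewrite -root_Xn_sub_lam.
by move: fx; rewrite -gen_poly_mul_min_poly rootM (negbTE not_mx) orbF.
Qed.

Lemma uniq_roots_Xn_sub_lam : uniq [seq zeta ^+ (1 + t * i) | i <- iota 0 n].
Proof.
rewrite map_inj_in_uniq ?iota_uniq // => i j; rewrite !mem_iota !add0n.
move=> /andP[_ i_lt] /andP[_ j_lt] /eqP; rewrite (eq_prim_root_expr zeta_prim) eqn_modDl.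
by rewrite -!muln_modr !modn_small // eqn_mul2l (gtn_eqF t_gt0) => /eqP.
Qed.

Lemma root_Xn_sub_lam_zeta i : root fL (zeta ^+ (1 + t * i)).
Proof.
rewrite root_Xn_sub_lam -exprM mulnDl mul1n exprD zeta_n mulnAC exprM.
by rewrite expr_zeta_tn expr1n mulr1.
Qed.

Lemma rVhorner_code_inj : {in C &, injective (fun c => rVhorner c theta)}.
Proof.
move=> c d cC dC cd_theta.
pose D := map_poly (in_alg L) (rVpoly c - rVpoly d).
have DE x : D.[x] = rVhorner c x - rVhorner d x.
  by rewrite /D rmorphB /= hornerD hornerN.
suff : D = 0 by move/eqP; rewrite map_poly_eq0 subr_eq0 => /eqP/(can_inj rVpolyK).
apply: (roots_geq_poly_eq0 _ uniq_roots_Xn_sub_lam); last first.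
  rewrite size_map size_iota size_map_poly (leq_trans (size_polyD _ _)) //.
  by rewrite geq_max size_polyN !size_poly.
apply/allP => _ /mapP [i _ ->]; rewrite rootE; have fx := root_Xn_sub_lam_zeta i.
have [/root_min_poly_coset [e ->] | not_mx] := boolP (root m (zeta ^+ (1 + t * i))).
  rewrite -horner_map_expr_card_exp DE /= cd_theta subrr expr0n.
  by rewrite expn_eq0 (gtn_eqF (ltnW (finNzRing_gt1 F))).
by rewrite DE !code_vanishes_off_coset ?subrr.
Qed.

Local Notation w := ((q - 1) * u)%N.

Lemma zeta_neq0 : zeta != 0.
Proof.
apply: contra_eq_neq expr_zeta_tn => ->.
by rewrite expr0n (gtn_eqF tn_gt0) eq_sym oner_neq0.
Qed.

Lemma expr_theta_card_pred i : (theta ^+ i) ^+ q.-1 = zeta ^+ (i * w).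
Proof. by rewrite -!exprM subn1; congr (zeta ^+ _); lia. Qed.

Lemma theta_scalar_eq i j (b : F) : b != 0 ->
  (exists2 b' : F, b' != 0 & theta ^+ i * b'%:A = theta ^+ j * b%:A) <->
  (i * w == j * w %[mod tn])%N.
Proof.
move=> b0; rewrite -(eq_prim_root_expr zeta_prim); split=> [[b' b'0 ij]|/eqP ij].
  have := congr1 (fun z => z ^+ q.-1) ij.
  by rewrite /= !exprMn !expr_theta_card_pred !in_alg_expr_card_pred // !mulr1 => ->.
have theta_i0 : theta ^+ i != 0 by rewrite !expf_neq0 ?zeta_neq0.
have y1 : (theta ^+ j * b%:A / theta ^+ i) ^+ q.-1 = 1.
  rewrite expr_div_n exprMn !expr_theta_card_pred in_alg_expr_card_pred // mulr1 ij.
  by rewrite divff // expf_neq0 // zeta_neq0.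
have [b' b'0 b'E] := expr_card_pred_in_alg y1.
by exists b'; rewrite // -b'E mulrC divfK.
Qed.

Local Notation shift_scale_pairs := [set x : 'I_tn * F | x.2 != 0].

Lemma card_shift_scale_pairs : #|shift_scale_pairs| = (tn * q.-1)%N.
Proof.
have -> : shift_scale_pairs = setX [set: 'I_tn] [set~ 0 : F].
  by apply/setP => -[i b]; rewrite !inE.
by rewrite cardsX cardsT card_ord cardsC1.
Qed.

Lemma card_theta_scalar_fiber y : y \in shift_scale_pairs ->
  #|[set x in shift_scale_pairs | theta ^+ x.1 * x.2%:A == theta ^+ y.1 * y.2%:A]|
  = gcdn w tn.
Proof.
rewrite inE => y0; rewrite -(card_mul_congr_mod w y.1 tn_gt0).
rewrite -(card_in_imset (f := fst)); last first.
  move=> [i b1] [i' b2]; rewrite !inE /= => /andP [_ /eqP e1] /andP [_ /eqP e2] ii'.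
  subst i'.
  have : theta ^+ i * b1%:A = theta ^+ i * b2%:A by rewrite e1 e2.
  move/(mulfI (expf_neq0 _ (expf_neq0 _ zeta_neq0))).
  by rewrite -!in_algE => /fmorph_inj ->.
apply: eq_card => i; rewrite [in RHS]inE; apply/imsetP/idP.
  case=> -[j b]; rewrite !inE /= => /andP [b0 /eqP ij] ->.
  by apply/(theta_scalar_eq _ _ y0); exists b.
case/(theta_scalar_eq _ _ y0) => b b0 ib; exists (i, b) => //.
by rewrite !inE /= b0 ib eqxx.
Qed.

Local Notation rhoG := (rhoM_group n lam).

Lemma orbit_code c : c \in C ->
  orbit 'P rhoG c = [set iter x.1 (rho l) (x.2 *: c) | x : 'I_tn * F in shift_scale_pairs].
Proof.
move=> cC; have theta_tn : theta ^+ tn = 1 by rewrite exprAC expr_zeta_tn expr1n.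
apply/setP => d; apply/orbit_rhoM_groupP/imsetP => [[j [b [b0 <-]]] | [[j b]]].
  exists (Ordinal (ltn_pmod j tn_gt0), b); rewrite ?inE //=.
  apply: rVhorner_code_inj; rewrite ?ideal_gen_iter_rhoZ //=.
  by rewrite !rVhorner_iter_rhoZ ?expr_theta_n // -(expr_mod _ theta_tn).
by rewrite inE /= => b0 ->; exists j, b.
Qed.

Lemma card_orbit_code c : c \in C :\ 0 ->
  (#|orbit 'P rhoG c| * gcdn w tn)%N = (tn * q.-1)%N.
Proof.
rewrite in_setD1 => /andP [c0 cC]; rewrite orbit_code // -card_shift_scale_pairs.
apply: card_imset_uniform_fibers => y y_pair.
rewrite -(card_theta_scalar_fiber y_pair).
have c_theta0 : rVhorner c theta != 0.
  apply: contraNneq c0 => c_theta; apply/eqP/rVhorner_code_inj => //.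
    exact: ideal_gen0.
  by rewrite c_theta rVhorner0.
apply: eq_card => x; rewrite !inE; congr (_ && _); apply/eqP/eqP => [xy | xy].
  have := congr1 (fun v => rVhorner v theta) xy.
  by rewrite /= !rVhorner_iter_rhoZ ?expr_theta_n // => /(mulIf c_theta0).
apply: rVhorner_code_inj; rewrite ?ideal_gen_iter_rhoZ //.
by rewrite !rVhorner_iter_rhoZ ?expr_theta_n // xy.
Qed.

Lemma card_orbits_code :
  (#|C :\ 0%R| * gcdn w tn)%N = (#|orbit 'P rhoG @: (C :\ 0%R)| * (tn * q.-1))%N.
Proof.
have acts : [acts rhoG, on C :\ 0 | 'P].
  apply: rhoM_group_acts => j b x b0; rewrite !in_setD1 iter_rhoZ_eq0 //.
  by case/andP=> -> /(ideal_gen_iter_rhoZ n_gt0 j b).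
rewrite (card_partition (orbit_partition acts)) big_distrl /= -sum_nat_const.
by apply: eq_bigr => _ /imsetP [c cC ->]; rewrite card_orbit_code.
Qed.

End IrreducibleCode.

Theorem lemma5 (F : finFieldType) (n t : nat) (lam : {unit F}) (alpha : nat)
    (L : fieldExtType F) (zeta : L) (g : {poly F}) :
  (0 < n)%N -> coprime n #|F| ->
  (0 < t)%N -> t.-primitive_root (val lam) ->
  (t * n)%N.-primitive_root zeta -> zeta ^+ n = (val lam)%:A ->
  (alpha < n)%N ->
  (forall beta, (beta < alpha)%N ->
     ~~ in_cyc (t * n) #|F| (1 + t * alpha) ((1 + t * beta) %% (t * n))) ->
  map_poly (in_alg L) g = gen_poly_L n zeta (val lam) (t * n) #|F| (1 + t * alpha) ->
  let q := #|F| in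
  let k := #|cyc_coset (t * n) q (1 + t * alpha)| in
  let C := ideal_gen n (val lam) g in
  let Cs := C :\ 0 in
  let N := #|orbit 'P (rhoM_group n lam) @: Cs| in
  let nweights := size (undup [seq wt c | c <- enum Cs]) in
  [/\ N%:Q = ((q ^ k - 1) * gcdn ((q - 1) * (1 + t * alpha)) (t * n))%N%:Q
              / ((q - 1) * t * n)%N%:Q,
      (nweights <= N)%N &
      (nweights = N <->
        (forall c1 c2, c1 \in Cs -> c2 \in Cs -> wt c1 = wt c2 ->
          exists (j : nat) (b : F), b != 0 /\ iter j (rho (val lam)) (b *: c1) = c2))].
Proof.
move=> n_gt0 _ t_gt0 lam_prim zeta_prim zeta_n _ _ g_def q k C Cs N nweights.
have card_Cs := card_code_nonzero n_gt0 lam_prim zeta_prim zeta_n g_def.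
have wt_orbit := @wt_orbit_rhoM F n lam.
split.
- have q1_gt0 : (0 < q - 1)%N by rewrite subn_gt0 finNzRing_gt1.
  rewrite -card_Cs (card_orbits_code n_gt0 t_gt0 lam_prim zeta_prim zeta_n g_def).
  rewrite -/N subn1 [(t * n * _)%N]mulnC [(_.-1 * _)%N]mulnA -subn1 PoszM intrM mulfK //.
  by rewrite intr_eq0 -lt0n !muln_gt0 q1_gt0 t_gt0 n_gt0.
- exact: card_orbit_values_le.
rewrite card_orbit_values_eq //.
by split=> same_orbit c1 c2 c1C c2C same_wt; apply/orbit_rhoM_groupP/same_orbit.
Qed.
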